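(* For $n\ge 4$, the dom-bondage number of the cycle $C_n$ is $B_{dom}(C_n)=3$ if $n\equiv 2\pmod 4$, and $B_{dom}(C_n)=2$ otherwise.
   Context: A dominated coloring of a graph is a proper coloring in which every color class is dominated by at least one vertex, i.e. for each color class $C$ there is a vertex adjacent to every vertex of $C$; $\chi_{dom}(G)$ is the minimum number of colors in a dominated coloring. The dom-bondage number $B_{dom}(G)$ is the minimum number of edges of $G$ whose removal changes the dominated chromatic number of $G$. *)

From mathcomp Require Import all_boot.
Set Implicit Arguments. Unset Strict Implicit. Unset Printing Implicit Defensive.

Section Graphs.
Variable T : finType.

(* A finite simple graph on vertex set T is given by its edge set E, a set of
   2-element subsets of T.  Adjacency: *)
Definition adj (E : {set {set T}}) (x y : T) : bool :=
  (x != y) && ([set x; y] \in E).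

Definition dominated_coloring (E : {set {set T}}) (k : nat) (c : {ffun T -> 'I_k}) : bool :=
  [forall x, forall y, adj E x y ==> (c x != c y)] &&
  [forall i : 'I_k, exists v, forall x, (c x == i) ==> adj E v x].

Definition dom_colorable (E : {set {set T}}) (k : nat) : bool :=
  [exists c : {ffun T -> 'I_k}, dominated_coloring E c].

Definition no_isolated (E : {set {set T}}) : bool :=
  [forall x, exists y, adj E x y].

(* For
   graphs without isolated vertices a dominated coloring with #|T| colors always
   exists, so this is the true minimum; it is only used for such graphs. *)
Definition chi_dom (E : {set {set T}}) : nat :=
  \big[minn/#|T|]_(k < #|T|.+1 | dom_colorable E k) k.

(* F is a set of edges whose removal changes the dominated chromatic number
   (the resulting graph being required to have no isolated vertices, so that
   its dominated chromatic number is defined). *)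
Definition dom_changing (E F : {set {set T}}) : bool :=
  [&& F \subset E, no_isolated (E :\: F) & chi_dom (E :\: F) != chi_dom E].

Definition is_dom_bondage (E : {set {set T}}) (b : nat) : Prop :=
  (exists F, dom_changing E F /\ #|F| = b) /\
  (forall F, dom_changing E F -> b <= #|F|).

End Graphs.

Definition cycle_edges (n : nat) : {set {set 'I_n}} :=
  [set [set i; ordS i] | i : 'I_n].

(* Every color class of a dominated coloring of a spanning subgraph of C_n lies
   in the neighbourhood of its dominator, so it has at most two vertices, and a
   two-vertex class is a pair {v-1, v+1}.  Hence chi_dom >= n/2, and when
   n = 2 (mod 4) a coloring with exactly n/2 colors would split the odd number
   n/2 of even vertices into pairs; so every spanning subgraph needs at least
   [chi_cycle n] = ceil(n/2) + [n = 2 mod 4] colors.  The periodic coloring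
   0,1,0,1,2,3,2,3,... of paths achieves it on C_n, on C_n minus one edge,
   and, when n = 2 (mod 4), on C_n minus two edges (two paths).  Conversely,
   deleting edges two apart isolates edges whose ends must be singleton classes:
   two such deletions raise chi_dom unless n = 2 (mod 4), three always do. *)

From mathcomp Require Import all_boot zify.
Set Implicit Arguments. Unset Strict Implicit. Unset Printing Implicit Defensive.

Section DominatedColorings.
Variable T : finType.
Implicit Types (G : {set {set T}}) (k : nat).

Lemma adjC G x y : adj G x y = adj G y x.
Proof. by rewrite /adj eq_sym setUC. Qed.

Lemma chi_dom_least G m : dom_colorable G m -> m <= #|T| ->
  (forall k, dom_colorable G k -> m <= k) -> chi_dom G = m.
Proof.
move=> colm le_mT min_m; apply/eqP; rewrite eqn_leq; apply/andP; split.
  have : Ordinal (le_mT : m < #|T|.+1) \in index_enum 'I_#|T|.+1.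
    by rewrite mem_index_enum.
  rewrite /chi_dom; elim: (index_enum _) => [//|a r IHr]; rewrite inE big_cons.
  case/orP => [/eqP <-|/IHr le_r_m]; first by rewrite colm geq_minl.
  by case: ifP => _ //; rewrite geq_min le_r_m orbT.
apply: (big_ind (leq m)) => // [x y mx my|k /min_m //].
by rewrite leq_min mx my.
Qed.

Lemma dom_colorable_chi_dom G : chi_dom G < #|T| -> dom_colorable G (chi_dom G).
Proof.
suff : (chi_dom G == #|T|) || dom_colorable G (chi_dom G).
  by case/orP => [/eqP ->|//]; rewrite ltnn.
apply: (big_ind (fun x => (x == #|T|) || dom_colorable G x)) => //.
- by rewrite eqxx.
- by move=> x y px py; case: leqP.
- by move=> k ->; rewrite orbT.
Qed.

Lemma dominated_class G k (c : {ffun T -> 'I_k}) i :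
  dominated_coloring G c -> exists v, forall x, c x = i -> adj G v x.
Proof.
case/andP => _ /forallP /(_ i) /existsP [v /forallP dom_v].
by exists v => x cx; apply: (implyP (dom_v x)); apply/eqP.
Qed.

Lemma isolated_edge_singleton G k (c : {ffun T -> 'I_k}) x y :
  dominated_coloring G c -> (forall v, adj G v x -> v = y) ->
  (forall z, adj G y z -> z = x) -> forall z, c z = c x -> z = x.
Proof.
move=> col_c nbr_x nbr_y z cz; have [v dom_v] := dominated_class (c x) col_c.
have vy : v = y by apply: nbr_x; apply: dom_v.
by apply: nbr_y; rewrite -vy; apply: dom_v.
Qed.

(* Singleton classes are dominated by any neighbour, so only the larger classes
   need a dominating vertex. *)
Lemma dominated_coloringP G k (c : {ffun T -> 'I_k}) (x0 : T) :
  no_isolated G -> (forall x y, adj G x y -> c x != c y) ->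
  (forall x y, c x = c y -> x != y -> exists v, forall z, c z = c x -> adj G v z) ->
  dominated_coloring G c.
Proof.
move=> noiso proper dom2; apply/andP; split.
  by apply/forallP => x; apply/forallP => y; apply/implyP; apply: proper.
apply/forallP => i; case: (pickP (fun x => c x == i)) => [x /eqP cx|no_i]; last first.
  by apply/existsP; exists x0; apply/forallP => x; rewrite no_i.
case: (pickP (fun y => (c y == i) && (y != x))) => [y /andP [/eqP cy nyx]|single].
  have [v dom_v] := dom2 y x (etrans cy (esym cx)) nyx.
  by apply/existsP; exists v; apply/forallP => z; apply/implyP => /eqP czi;
    apply: dom_v; rewrite czi.
case/existsP: (forallP noiso x) => w adj_xw.
apply/existsP; exists w; apply/forallP => z; apply/implyP => czi.
by have := single z; rewrite czi /= => /negbFE /eqP ->; rewrite adjC.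
Qed.

End DominatedColorings.

Section ColorClasses.
Variables (T : finType) (k : nat) (c : T -> 'I_k).
Local Notation class i := [set x | c x == i].

Lemma card_classes (A : {set T}) : #|A| = \sum_(i < k) #|A :&: class i|.
Proof.
rewrite -sum1_card (partition_big c xpredT) //=; apply: eq_bigr => i _.
by rewrite -sum1_card; apply: eq_bigl => x; rewrite !inE andbC.
Qed.

Lemma card_singleton_classes_le (X : {set T}) :
  (forall i, #|class i| <= 2) -> {in X, forall x y, c y = c x -> y = x} ->
  #|T| + #|X| <= 2 * k.
Proof.
move=> le2 singleX; rewrite -cardsT (card_classes setT) (card_classes X).
rewrite -big_split /= (@leq_trans (\sum_(i < k) 2)) //; last first.
  by rewrite sum_nat_const card_ord mulnC.
apply: leq_sum => i _.
rewrite setTI; case: (set_0Vmem (X :&: class i)) => [-> | [x]].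
  by rewrite cards0 addn0.
rewrite !inE => /andP [Xx /eqP cx].
have -> : class i = [set x].
  by apply/setP => y; rewrite !inE -cx; apply/eqP/eqP => [/singleX -> //|->].
by rewrite cards1 -addn1 leq_add2l -(cards1 x) subset_leq_card ?subsetIr.
Qed.

Lemma card_classes_eq2 : #|T| = 2 * k -> (forall i, #|class i| <= 2) ->
  forall i, #|class i| = 2.
Proof.
move=> cardT le2 i; apply/eqP; rewrite eqn_leq le2 /=.
have sum_cl : \sum_(j < k) #|class j| = 2 * k.
  by rewrite -cardT -cardsT card_classes; apply: eq_bigr => j _; rewrite setTI.
have : \sum_(j < k) (2 - #|class j|) = 0.
  apply/eqP; rewrite -(eqn_add2r (\sum_(j < k) #|class j|)) add0n -big_split /=.
  rewrite (eq_bigr (fun=> 2)) => [|j _]; last by rewrite subnK.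
  by rewrite sum_nat_const card_ord sum_cl mulnC.
by move/eqP; rewrite sum_nat_eq0 => /forallP /(_ i); rewrite subn_eq0.
Qed.

Lemma even_card_union_classes (A : {set T}) :
  (forall i, ~~ odd #|class i|) -> (forall x y, c x = c y -> (x \in A) = (y \in A)) ->
  ~~ odd #|A|.
Proof.
move=> even_cl closedA; rewrite card_classes -dvdn2; apply: dvdn_sum => i _.
case: (set_0Vmem (A :&: class i)) => [-> | [x]]; first by rewrite cards0.
rewrite !inE => /andP [Ax /eqP cx].
suff -> : A :&: class i = class i by rewrite dvdn2.
apply/setIidPr/subsetP => y; rewrite inE => /eqP cy.
by rewrite -(closedA x) // cx cy.
Qed.

End ColorClasses.

(* ceil(m/2), plus one when m = 2 (mod 4); it is also the number of colors
   [block_color] uses on a path with m vertices. *)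
Definition chi_cycle m := (m + 2) %/ 4 + (m + 3) %/ 4.

(* 0,1,0,1,2,3,2,3,...: each class {4q, 4q+2} or {4q+1, 4q+3} is dominated
   by its middle vertex. *)
Definition block_color y := 2 * (y %/ 4) + y %% 2.

(* Positions [0, P) and [P, ...) form two paths, colored with disjoint palettes. *)
Definition split_color P y :=
  if y < P then block_color y else chi_cycle P + block_color (y - P).

Lemma split_color_lt n P y : y < n -> P <= n ->
  split_color P y < chi_cycle P + chi_cycle (n - P).
Proof. rewrite /split_color /block_color /chi_cycle; case: ifP; lia. Qed.

Lemma split_color_succ P y : y.+1 != P -> split_color P y != split_color P y.+1.
Proof. by rewrite /split_color /block_color; case: ifP; case: ifP => *; lia. Qed.

Lemma split_color_gap P y y' : y < y' -> split_color P y = split_color P y' ->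
  [/\ y' = y.+2, y.+1 != P & y.+2 != P].
Proof.
by rewrite /split_color /block_color /chi_cycle; case: ifP; case: ifP => *; split; lia.
Qed.

Lemma split_color_class P p q r : p < q -> split_color P p = split_color P q ->
  split_color P r = split_color P p -> r = p \/ r = q.
Proof.
move=> lt_pq c_pq c_rp; have [q_eq _ _] := split_color_gap lt_pq c_pq.
case: (ltngtP r p) => [lt_rp | lt_pr | ->]; [exfalso | right | by left].
  have [p_eq _ _] := split_color_gap lt_rp c_rp.
  have [] := split_color_gap (_ : r < q) (etrans c_rp c_pq); lia.
by have [] := split_color_gap lt_pr (esym c_rp); lia.
Qed.

Lemma chi_cycle_split n P : n %% 4 = 2 -> P <= n ->
  chi_cycle P + chi_cycle (n - P) <= chi_cycle n.
Proof. rewrite /chi_cycle; lia. Qed.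

Lemma block_color_last n : 3 < n -> block_color n.-1 != 0.
Proof. rewrite /block_color; lia. Qed.

Lemma chi_cycle_ltn m : 2 < m -> chi_cycle m < m.
Proof. rewrite /chi_cycle; lia. Qed.

Section CycleSubgraphs.
Variable n : nat.
Hypothesis n_gt2 : 2 < n.
Local Notation E := (cycle_edges n).

Definition cycle_edge (j : 'I_n) : {set 'I_n} := [set j; ordS j].

Lemma val_iter_ordS k (x : 'I_n) : val (iter k (@ordS n) x) = (x + k) %% n.
Proof.
elim: k => [|k IHk] /=; first by rewrite addn0 modn_small.
by rewrite IHk -addn1 modnDml addn1 addnS.
Qed.

Lemma eq_iter_ordS k l (x : 'I_n) : k < n -> l < n ->
  (iter k (@ordS n) x == iter l (@ordS n) x) = (k == l).
Proof. by move=> lt_kn lt_ln; rewrite -val_eqE !val_iter_ordS eqn_modDl !modn_small. Qed.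

Lemma ordS_neq (x : 'I_n) : ordS x != x.
Proof. by rewrite (@eq_iter_ordS 1 0) //; lia. Qed.

Lemma cycle_edge_in j : cycle_edge j \in E.
Proof. exact: imset_f. Qed.

Lemma cycle_edge_inj : injective cycle_edge.
Proof.
move=> j j' eq_e; have := set21 j (ordS j); have := set22 j (ordS j).
rewrite -/(cycle_edge j) eq_e !inE => /orP [/eqP Sj_j' | /eqP /ordS_inj //].
case/orP => [/eqP // | /eqP j_Sj'].
by have := @eq_iter_ordS 2 0 j n_gt2; rewrite /= Sj_j' -j_Sj' eqxx; lia.
Qed.

Lemma adj_cycle_sub (G : {set {set 'I_n}}) v x :
  G \subset E -> adj G v x -> x = ordS v \/ v = ordS x.
Proof.
move=> sGE /andP [nvx /(subsetP sGE) /imsetP [j _ ej]].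
move: nvx (set21 v x) (set22 v x); rewrite ej !inE.
by move=> nvx /orP [] /eqP vj /orP [] /eqP xj; subst;
  rewrite ?eqxx // in nvx; [left | right].
Qed.

Lemma card_even_ord : #|[set x : 'I_n | ~~ odd x]| = n.+1 %/ 2.
Proof.
have sum_even m : \sum_(i < m) (~~ odd i : nat) = m.+1 %/ 2.
  elim: m => [|m IHm]; first by rewrite big_ord0.
  by rewrite big_ord_recr /= IHm; have := modn2 m; case: (odd m) => /=; lia.
rewrite -sum_even -sum1_card big_mkcond /=.
by apply: eq_bigr => i _; rewrite inE; case: (odd i).
Qed.

Section DominatedColoringOfSubgraph.
Variables (G : {set {set 'I_n}}) (k : nat) (c : {ffun 'I_n -> 'I_k}).
Hypotheses (sGE : G \subset E) (col_c : dominated_coloring G c).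

Lemma card_class_le2 i : #|[set x | c x == i]| <= 2.
Proof.
have [v dom_v] := dominated_class i col_c.
apply: (@leq_trans #|[set ordS v; ord_pred v]|); last by rewrite cards2 ltnS leq_b1.
apply/subset_leq_card/subsetP => x.
rewrite inE => /eqP /dom_v /(adj_cycle_sub sGE) [->|->].
  by rewrite set21.
by rewrite ordSK set22.
Qed.

Lemma class_same_parity x y : ~~ odd n -> c x = c y -> odd x = odd y.
Proof.
move=> even_n cxy; have [v dom_v] := dominated_class (c y) col_c.
have odd_S (w : 'I_n) : odd (ordS w) = ~~ odd w.
  by rewrite (val_iter_ordS 1) odd_mod ?(negbTE even_n) // addn1.
have odd_nbr z : adj G v z -> odd z = ~~ odd v.
  by case/(adj_cycle_sub sGE) => ->; rewrite odd_S ?negbK.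
by rewrite (odd_nbr x) ?(odd_nbr y) ?dom_v.
Qed.

End DominatedColoringOfSubgraph.

Lemma chi_cycle_le (G : {set {set 'I_n}}) k :
  G \subset E -> dom_colorable G k -> chi_cycle n <= k.
Proof.
move=> sGE /existsP [c col_c].
have le2 := card_class_le2 sGE col_c.
have le_n2k : n <= 2 * k.
  have := @card_singleton_classes_le _ _ c set0 le2.
  rewrite cards0 card_ord addn0.
  by apply=> x; rewrite inE.
suff : n %% 4 = 2 -> n <> 2 * k by rewrite /chi_cycle; lia.
move=> n_mod4 n2k; have even_n : ~~ odd n by rewrite n2k oddM.
have cl2 := card_classes_eq2 (c := c) (etrans (card_ord n) n2k) le2.
have : ~~ odd (n.+1 %/ 2).
  rewrite -card_even_ord; apply: (even_card_union_classes (c := c)) => [i|x y cxy].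
    by rewrite cl2.
  by rewrite !inE (class_same_parity sGE col_c even_n cxy).
by rewrite -dvdn2 => /dvdnP [q]; lia.
Qed.

Lemma adj_cycle_minus (F : {set {set 'I_n}}) v x : adj (E :\: F) v x ->
  (x = ordS v /\ cycle_edge v \notin F) \/ (v = ordS x /\ cycle_edge x \notin F).
Proof.
move=> adj_vx; have [nvx] := andP adj_vx; rewrite in_setD => /andP [eF _].
case: (adj_cycle_sub (subsetDl E F) adj_vx) => [xE | vE]; [left | right].
  by rewrite /cycle_edge -xE.
by rewrite /cycle_edge -vE setUC.
Qed.

Lemma no_isolated_cycle_minus (F : {set {set 'I_n}}) :
  (forall y, cycle_edge y \in F -> cycle_edge (ordS y) \notin F) -> no_isolated (E :\: F).
Proof.
move=> sparseF; apply/forallP => x; apply/existsP.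
case eF: (cycle_edge x \in F); last first.
  by exists (ordS x); rewrite /adj eq_sym ordS_neq in_setD eF cycle_edge_in.
exists (ord_pred x); rewrite /adj -{1}(ord_predK x) ordS_neq /=.
rewrite -[[set _; _]]setUC -{2}(ord_predK x) in_setD cycle_edge_in andbT.
by apply/negP => /sparseF; rewrite ord_predK eF.
Qed.

Lemma isolated_pair_singletons (F : {set {set 'I_n}}) k (c : {ffun 'I_n -> 'I_k}) b :
  cycle_edge b \in F -> cycle_edge (ordS (ordS b)) \in F ->
  dominated_coloring (E :\: F) c ->
  {in [set ordS b; ordS (ordS b)], forall x z, c z = c x -> z = x}.
Proof.
move=> Fb FSSb col_c.
have nbr1 v : adj (E :\: F) v (ordS b) -> v = ordS (ordS b).
  by case/adj_cycle_minus => [[/ordS_inj <-]|[]]; rewrite ?Fb.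
have nbr2 v : adj (E :\: F) v (ordS (ordS b)) -> v = ordS b.
  by case/adj_cycle_minus => [[/ordS_inj <-]|[_]]; rewrite ?FSSb.
move=> x; rewrite !inE => /orP [] /eqP ->; apply: (isolated_edge_singleton col_c).
- exact: nbr1.
- by move=> z; rewrite adjC => /nbr2.
- exact: nbr2.
- by move=> z; rewrite adjC => /nbr1.
Qed.

(* With a_k = iter k ordS x, removing the edges {a_2j, a_2j+1} for j < s leaves
   the s - 1 isolated edges {a_2j+1, a_2j+2}. *)
Definition spaced_edges (x : 'I_n) s : {set {set 'I_n}} :=
  [set cycle_edge (iter (2 * j) (@ordS n) x) | j : 'I_s].

Section SpacedEdges.
Variables (x : 'I_n) (s : nat).
Hypothesis le_2s_n : 2 * s.+1 <= n.
Local Notation a k := (iter k (@ordS n) x).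
Local Notation F := (spaced_edges x s.+1).

Lemma mem_spaced_edges y : (cycle_edge y \in F) = [exists j : 'I_s.+1, y == a (2 * j)].
Proof.
apply/imsetP/existsP => [[j _ /cycle_edge_inj ->]|[j /eqP ->]]; first by exists j.
by exists j.
Qed.

Lemma card_spaced_edges : #|F| = s.+1.
Proof.
rewrite card_imset ?card_ord // => j j' /cycle_edge_inj /eqP.
have := ltn_ord j; have := ltn_ord j' => ? ?.
by rewrite eq_iter_ordS; [move/eqP => jj'; apply: ord_inj; lia | lia | lia].
Qed.

Lemma no_isolated_minus_spaced_edges : no_isolated (E :\: F).
Proof.
apply: no_isolated_cycle_minus => y; rewrite !mem_spaced_edges.
case/existsP => j /eqP ->; apply/existsP => -[j'].
have := ltn_ord j; have := ltn_ord j' => ? ?.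
by rewrite -iterS eq_iter_ordS; lia.
Qed.

Lemma spaced_edges_singletons k (c : {ffun 'I_n -> 'I_k}) :
  dominated_coloring (E :\: F) c ->
  {in [set a i.+1 | i : 'I_(2 * s)], forall y z, c z = c y -> z = y}.
Proof.
move=> col_c _ /imsetP [i _ ->].
have [j [lt_j lt_j1 i_j]] : exists j,
    [/\ j < s.+1, j.+1 < s.+1 & i = 2 * j :> nat \/ i = (2 * j).+1 :> nat].
  by exists (i %/ 2); have := ltn_ord i; split; lia.
apply: (isolated_pair_singletons (b := a (2 * j)) _ _ col_c).
- by rewrite mem_spaced_edges; apply/existsP; exists (Ordinal lt_j).
- rewrite -!iterS mem_spaced_edges; apply/existsP; exists (Ordinal lt_j1).
  by rewrite -[Ordinal lt_j1 : nat]/j.+1 mulnS add2n.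
by rewrite !inE -!iterS; case: i_j => ->; rewrite eqxx ?orbT.
Qed.

Lemma dom_colorable_minus_spaced_edges k :
  dom_colorable (E :\: F) k -> n + 2 * s <= 2 * k.
Proof.
case/existsP => c col_c.
have := card_singleton_classes_le (card_class_le2 (subsetDl E F) col_c)
  (spaced_edges_singletons col_c).
rewrite card_ord card_imset ?card_ord // => i i' /eqP.
have := ltn_ord i; have := ltn_ord i' => ? ?.
by rewrite eq_iter_ordS; [move/eqP => ii'; apply: ord_inj; lia | lia | lia].
Qed.

End SpacedEdges.
End CycleSubgraphs.

Section CutCycle.
Variables (n : nat) (i : 'I_n).

(* Position of x on the path ordS i, ordS (ordS i), ..., i obtained by cutting
   the cycle at the edge {i, ordS i}. *)
Definition cut_pos (x : 'I_n) := (x + (n - 1 - i)) %% n.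

Lemma cut_pos_lt x : cut_pos x < n.
Proof. by rewrite ltn_pmod // (leq_ltn_trans _ (ltn_ord i)). Qed.

Lemma cut_pos_inj : injective cut_pos.
Proof.
move=> x y /eqP; rewrite /cut_pos eqn_modDr => /eqP; rewrite !modn_small //.
exact: ord_inj.
Qed.

Lemma cut_pos_self : cut_pos i = n.-1.
Proof. by rewrite /cut_pos modn_small; have := ltn_ord i; lia. Qed.

Lemma cut_pos_ordS_mod x : cut_pos (ordS x) = (cut_pos x).+1 %% n.
Proof. by rewrite /cut_pos /= modnDml addSn -addn1 -modnDml addn1. Qed.

Lemma cut_pos_ordS x : cut_pos x != n.-1 -> cut_pos (ordS x) = (cut_pos x).+1.
Proof.
by move=> not_last; rewrite cut_pos_ordS_mod modn_small //; have := cut_pos_lt x; lia.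
Qed.

End CutCycle.

Section SplitColoring.
Variables (n : nat) (i : 'I_n) (P : nat) (G : {set {set 'I_n}}).
Hypotheses (n_gt2 : 2 < n) (le_Pn : P <= n) (sGE : G \subset cycle_edges n).
Hypothesis G_path_edges :
  forall j, cut_pos i j != n.-1 -> (cut_pos i j).+1 != P -> cycle_edge j \in G.
Hypothesis G_proper :
  forall j, cycle_edge j \in G ->
  split_color P (cut_pos i j) != split_color P (cut_pos i (ordS j)).
Hypothesis G_no_isolated : no_isolated G.

Definition split_coloring : {ffun 'I_n -> 'I_(chi_cycle P + chi_cycle (n - P))} :=
  [ffun x => Ordinal (split_color_lt (cut_pos_lt i x) le_Pn)].

Lemma split_coloringE x : val (split_coloring x) = split_color P (cut_pos i x).
Proof. by rewrite ffunE. Qed.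

Lemma dominated_split_coloring : dominated_coloring G split_coloring.
Proof.
have c_eq x y : (split_coloring x == split_coloring y) =
                (split_color P (cut_pos i x) == split_color P (cut_pos i y)).
  by rewrite -val_eqE !split_coloringE.
apply: (dominated_coloringP i G_no_isolated) => [x y adj_xy | x y /eqP].
  rewrite c_eq; have [_ Gxy] := andP adj_xy.
  case: (adj_cycle_sub sGE adj_xy) => [y_eq | x_eq].
    by rewrite y_eq; apply: G_proper; rewrite /cycle_edge -y_eq.
  by rewrite eq_sym x_eq; apply: G_proper; rewrite /cycle_edge -x_eq setUC.
rewrite c_eq => /eqP cxy nxy.
wlog lt_xy : x y cxy nxy / cut_pos i x < cut_pos i y.
  move=> wlog_lt; case: (ltngtP (cut_pos i x) (cut_pos i y)) => [|lt_yx|/cut_pos_inj exy].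
  - exact: wlog_lt.
  - rewrite eq_sym in nxy; have [v dom_v] := wlog_lt y x (esym cxy) nxy lt_yx.
    exists v => z czx; apply: dom_v; rewrite czx; apply/eqP.
    by rewrite c_eq cxy.
  - by rewrite exy eqxx in nxy.
have [y_eq not_cut1 not_cut2] := split_color_gap lt_xy cxy.
have x_not_last : cut_pos i x != n.-1 by have := cut_pos_lt i y; lia.
have pos_Sx := cut_pos_ordS x_not_last.
have Sx_not_last : cut_pos i (ordS x) != n.-1.
  by rewrite pos_Sx; have := cut_pos_lt i y; lia.
have SSx : ordS (ordS x) = y.
  by apply: (@cut_pos_inj _ i); rewrite cut_pos_ordS // pos_Sx y_eq.
exists (ordS x) => z /eqP; rewrite c_eq => /eqP czx.
have [/cut_pos_inj -> | /cut_pos_inj ->] := split_color_class lt_xy cxy czx.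
  rewrite /adj ordS_neq // setUC.
  by apply: G_path_edges.
rewrite /adj -SSx eq_sym ordS_neq //.
by apply: G_path_edges; rewrite // pos_Sx.
Qed.

End SplitColoring.

Section CycleBondage.
Variable n : nat.
Hypothesis n_gt3 : 3 < n.
Let n_gt2 : 2 < n. Proof. exact: ltnW. Qed.
Local Notation E := (cycle_edges n).

Lemma chi_dom_cycle_sub (G : {set {set 'I_n}}) :
  G \subset E -> dom_colorable G (chi_cycle n) -> chi_dom G = chi_cycle n.
Proof.
move=> sGE col; apply: chi_dom_least => //; last by move=> k; apply: chi_cycle_le.
by rewrite card_ord ltnW // chi_cycle_ltn.
Qed.

Lemma no_isolated_cycle : no_isolated E.
Proof.
by rewrite -(setD0 E); apply: (no_isolated_cycle_minus n_gt2) => y; rewrite inE.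
Qed.

Lemma chi_dom_cycle : chi_dom E = chi_cycle n.
Proof.
have i : 'I_n := Ordinal (ltnW n_gt2).
apply: chi_dom_cycle_sub => //; apply/existsP.
have -> : chi_cycle n = chi_cycle n + chi_cycle (n - n) by rewrite subnn addn0.
exists (split_coloring i (leqnn n)).
apply: dominated_split_coloring => // [j _ _ | j _ | ]; last exact: no_isolated_cycle.
  exact: cycle_edge_in.
case: (eqVneq (cut_pos i j) n.-1) => [last_j | not_last]; last first.
  by rewrite cut_pos_ordS //; apply: split_color_succ; have := cut_pos_lt i j; lia.
have -> : j = i by apply: (@cut_pos_inj _ i); rewrite last_j cut_pos_self.
rewrite cut_pos_ordS_mod cut_pos_self prednK ?modnn; last lia.
by rewrite /split_color ifT ?ifT //; [apply: block_color_last | lia | lia].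
Qed.

(* F consists of the cut edge at i and the edge between positions P - 1 and P,
   so E :\: F is made of two paths with P and n - P vertices. *)
Lemma chi_dom_cycle_minus_cut (i : 'I_n) P (F : {set {set 'I_n}}) : P <= n ->
  (forall j, (cycle_edge j \in F) = (cut_pos i j == n.-1) || ((cut_pos i j).+1 == P)) ->
  no_isolated (E :\: F) -> chi_cycle P + chi_cycle (n - P) <= chi_cycle n ->
  chi_dom (E :\: F) = chi_cycle n.
Proof.
move=> le_Pn memF noiso le_split.
have not_cut j : cycle_edge j \in E :\: F -> cut_pos i j != n.-1 /\ (cut_pos i j).+1 != P.
  by rewrite in_setD memF negb_or => /andP [/andP []].
have col : dom_colorable (E :\: F) (chi_cycle P + chi_cycle (n - P)).
  apply/existsP; exists (split_coloring i le_Pn).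
  apply: dominated_split_coloring => // [|j|j /not_cut [? ?]].
  - exact: subsetDl.
  - by move=> h1 h2; rewrite in_setD memF cycle_edge_in andbT negb_or h1 h2.
  - by rewrite cut_pos_ordS //; apply: split_color_succ.
have eq_split : chi_cycle P + chi_cycle (n - P) = chi_cycle n.
  by apply/eqP; rewrite eqn_leq le_split (chi_cycle_le n_gt2 (subsetDl E F) col).
by apply: chi_dom_cycle_sub; rewrite ?subsetDl // -eq_split.
Qed.

Lemma chi_dom_cycle_minus1 (F : {set {set 'I_n}}) :
  F \subset E -> #|F| = 1 -> no_isolated (E :\: F) -> chi_dom (E :\: F) = chi_cycle n.
Proof.
move=> sFE /eqP /cards1P [e F_eq]; move: sFE; rewrite F_eq sub1set.
case/imsetP=> i _ -> noiso; apply: (chi_dom_cycle_minus_cut (i := i) (P := n)) => // [j|].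
  rewrite in_set1 (inj_eq (cycle_edge_inj n_gt2)) -[n.-1](cut_pos_self i).
  rewrite (inj_eq (@cut_pos_inj _ i)); apply/esym/orb_idr => /eqP pos_j.
  by apply/eqP/(@cut_pos_inj _ i); rewrite cut_pos_self -[in RHS]pos_j.
by rewrite subnn addn0.
Qed.

Lemma chi_dom_cycle_minus2 (F : {set {set 'I_n}}) : n %% 4 = 2 ->
  F \subset E -> #|F| = 2 -> no_isolated (E :\: F) -> chi_dom (E :\: F) = chi_cycle n.
Proof.
move=> n_mod4 sFE /eqP /cards2P [e [e' [_ F_eq]]].
move: sFE; rewrite F_eq subUset !sub1set => /andP [/imsetP [i _ ->] /imsetP [i' _ ->]].
have le_P : (cut_pos i i').+1 <= n := cut_pos_lt i i'.
move=> noiso; apply: (chi_dom_cycle_minus_cut (i := i) le_P) => // [j|].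
  rewrite in_set2 !(inj_eq (cycle_edge_inj n_gt2)) -(cut_pos_self i) eqSS.
  by rewrite !(inj_eq (@cut_pos_inj _ i)).
exact: chi_cycle_split.
Qed.

Lemma dom_changing_spaced_edges x s : 2 * s.+1 <= n -> 2 * chi_cycle n < n + 2 * s ->
  dom_changing E (spaced_edges x s.+1).
Proof.
move=> le_2s_n lt_chi; apply/and3P; split.
- by apply/subsetP => _ /imsetP [j _ ->]; apply: cycle_edge_in.
- exact: no_isolated_minus_spaced_edges.
rewrite chi_dom_cycle; apply/eqP => chi_eq.
have lt_chi_n : chi_dom (E :\: spaced_edges x s.+1) < #|'I_n|.
  by rewrite chi_eq card_ord chi_cycle_ltn.
have := dom_colorable_minus_spaced_edges n_gt2 le_2s_n (dom_colorable_chi_dom lt_chi_n).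
by rewrite chi_eq; lia.
Qed.

End CycleBondage.

Theorem mainTheorem14 (n : nat) (hn : 4 <= n) :
  is_dom_bondage (cycle_edges n) (if n %% 4 == 2 then 3 else 2).
Proof.
split.
  have x : 'I_n := Ordinal (ltn_trans (isT : 0 < 3) hn).
  have [s [-> le_2s_n lt_chi]] : exists s, [/\ (if n %% 4 == 2 then 3 else 2) = s.+1,
      2 * s.+1 <= n & 2 * chi_cycle n < n + 2 * s].
    by case: eqP => n_mod4; [exists 2 | exists 1]; split; rewrite // /chi_cycle; lia.
  exists (spaced_edges x s.+1); split.
    exact: (dom_changing_spaced_edges hn x le_2s_n lt_chi).
  exact: (card_spaced_edges (ltnW hn) x le_2s_n).
move=> F /and3P [sFE noiso]; apply: contraLR; rewrite -ltnNge negbK => lt_F.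
rewrite (chi_dom_cycle hn); case: (ltngtP #|F| 1) => [|gt_F1|F1].
- by rewrite ltnS leqn0 => /eqP /cards0_eq ->; rewrite setD0 (chi_dom_cycle hn).
- move: lt_F; case: eqP => [n_mod4 lt_F | _]; last lia.
  by rewrite (chi_dom_cycle_minus2 hn n_mod4 sFE _ noiso) //; lia.
- by rewrite (chi_dom_cycle_minus1 hn sFE F1 noiso).
Qed.
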